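(* For any weighted graph $G$, any $\alpha\geq 1$, $\beta\geq 0$ and any initial subgraph $H_0\subseteq G$, the $(\alpha,\beta)$-completion algorithm terminates.
   Context: $G=(V,E,w)$ is an undirected graph with positive edge weights, in which every edge is a shortest path between its endpoints; $\mathrm{dist}_X$ is the weighted shortest-path distance in a graph $X$ and $W_{\max}(G)$ the maximum edge weight. For a shortest path $P_{x,y}=(x_0,\ldots,x_t)$ in $G$ and $H\subseteq G$, an $\alpha$-segmentation is a sequence of index intervals $([i_0,i_1],\ldots,[i_{s-1},i_s])$ with $0=i_0<\cdots<i_s=t$ such that every segment with $i_j-i_{j-1}\geq2$ satisfies $\mathrm{dist}_H(x_{i_{j-1}},x_{i_j})\leq\alpha\,\mathrm{dist}_G(x_{i_{j-1}},x_{i_j})$; it is minimal if no consecutive sequence of segments can be merged to give another $\alpha$-segmentation. $E_\alpha(\mathcal{S},H)$ is the set of edges $e=\{u,v\}$ forming length-one segments of $\mathcal{S}$ with $\mathrm{dist}_H(u,v)>\alpha w(e)$. The $(\alpha,\beta)$-completion algorithm: set $H\gets H_0$; while some pair $x,y$ has $\mathrm{dist}_H(x,y)>\alpha\,\mathrm{dist}_G(x,y)+\beta W_{\max}(G)$, pick such a pair, a shortest $x$–$y$ path $P_{x,y}$ in $G$, a minimal $\alpha$-segmentation $\mathcal{S}$ of it w.r.t. the current $H$, and set $H\gets H\cup E_\alpha(\mathcal{S},H)$. *)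

From HB Require Import structures.
From mathcomp Require Import all_boot all_order all_algebra.
From mathcomp Require Import boolp classical_sets reals constructive_ereal ereal.
Set Implicit Arguments. Unset Strict Implicit. Unset Printing Implicit Defensive.
Import Order.TTheory GRing.Theory Num.Theory.
Local Open Scope classical_set_scope.
Local Open Scope ring_scope.

Section Completion.
Variables (R : realType) (V : finType).

(* Undirected graphs on the vertex set V are represented by symmetric edge
   sets F : {set V * V} (both orientations of each edge are present); the
   weight function w is shared by G and all its subgraphs. *)

Definition walk_w (w : V -> V -> R) (x : V) (p : seq V) : R :=
  \sum_(ab <- zip (x :: p) p) w ab.1 ab.2.

Definition walks (F : {set V * V}) (x y : V) : set (seq V) :=
  [set p | path (fun a b => (a, b) \in F) x p /\ last x p = y].

(* weighted shortest-path distance (+oo if y is unreachable) *)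
Definition dist (w : V -> V -> R) (F : {set V * V}) (x y : V) : \bar R :=
  ereal_inf [set (walk_w w x p)%:E | p in walks F x y].

(* maximum edge weight of G (0 if G has no edge) *)
Definition Wmax (w : V -> V -> R) (E : {set V * V}) : R :=
  \big[Num.max/0]_(e in E) w e.1 e.2.

(* P = x :: p (i.e. x_0 = x, ..., x_t = last x p, t = size p) is a shortest
   x--y path in G *)
Definition shortest_path (w : V -> V -> R) (E : {set V * V}) (x y : V)
    (p : seq V) : Prop :=
  p \in walks E x y /\ (walk_w w x p)%:E = dist w E x y.

Definition pv (x : V) (p : seq V) (i : nat) : V := nth x (x :: p) i.

Definition segs (I : seq nat) : seq (nat * nat) := zip I (behead I).

Definition is_segmentation (w : V -> V -> R) (E H : {set V * V}) (alpha : R)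
    (x : V) (p : seq V) (I : seq nat) : Prop :=
  [/\ (2 <= size I)%N, head 1%N I = 0%N, last 0%N I = size p,
      sorted ltn I &
      forall ab, ab \in segs I -> (2 <= ab.2 - ab.1)%N ->
        (dist w H (pv x p ab.1) (pv x p ab.2) <=
         alpha%:E * dist w E (pv x p ab.1) (pv x p ab.2))%E].

(* minimal: merging segments j = p..q+1 (i.e. deleting the interior indices
   i_p, ..., i_q, for 1 <= p <= q <= s-1) never yields an alpha-segmentation *)
Definition is_minimal_segmentation (w : V -> V -> R) (E H : {set V * V})
    (alpha : R) (x : V) (p : seq V) (I : seq nat) : Prop :=
  is_segmentation w E H alpha x p I /\
  forall a b : nat, (0 < a)%N -> (a <= b)%N -> (b.+1 < size I)%N ->
    ~ is_segmentation w E H alpha x p (take a I ++ drop b.+1 I).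

(* E_alpha(S, H): edges forming length-one segments with dist_H > alpha w(e),
   both orientations *)
Definition Ealpha (w : V -> V -> R) (H : {set V * V}) (alpha : R)
    (x : V) (p : seq V) (I : seq nat) : {set V * V} :=
  [set e | has (fun ab : nat * nat =>
      [&& ab.2 == ab.1.+1 :> nat,
          (e == (pv x p ab.1, pv x p ab.2)) || (e == (pv x p ab.2, pv x p ab.1)) &
          ((alpha * w (pv x p ab.1) (pv x p ab.2))%:E
             < dist w H (pv x p ab.1) (pv x p ab.2))%E]) (segs I)].

(* one iteration of the while loop of the (alpha,beta)-completion algorithm *)
Definition completion_step (w : V -> V -> R) (E : {set V * V})
    (alpha beta : R) (H H' : {set V * V}) : Prop :=
  exists (x y : V) (p : seq V) (I : seq nat),
    [/\ (alpha%:E * dist w E x y + (beta * Wmax w E)%:E < dist w H x y)%E,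
        shortest_path w E x y p,
        is_minimal_segmentation w E H alpha x p I &
        H' = H :|: Ealpha w H alpha x p I].

End Completion.

(* Every iteration adds at least one new edge to H: if the edges E_alpha(S, H)
   were all in H already, every segment [a, b] of the minimal segmentation
   would satisfy dist_H(x_a, x_b) <= alpha * w(x_a .. x_b) (long segments by
   definition, length-one segments because their edge is in H or satisfies the
   bound outright), and chaining the segments with the triangle inequality
   would give dist_H(x, y) <= alpha * dist_G(x, y), so the loop condition
   fails.  Hence the complement of H strictly shrinks. *)

From HB Require Import structures.
From mathcomp Require Import all_boot all_order all_algebra.
From mathcomp Require Import boolp classical_sets reals constructive_ereal ereal.
From mathcomp Require Import zify.
Import Order.TTheory GRing.Theory Num.Theory.
Local Open Scope ring_scope.
Set Implicit Arguments. Unset Strict Implicit.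

Lemma path_ltn_le_last (i : nat) (I : seq nat) : path ltn i I -> (i <= last i I)%N.
Proof.
elim: I i => //= j I IH i /andP[/ltnW lt_ij /IH]; exact: leq_trans.
Qed.

Section Walks.
Variables (R : realType) (V : finType) (w : V -> V -> R).
Implicit Types (F : {set V * V}) (x y z : V) (p : seq V).

Lemma walk_w_cons x y p : walk_w w x (y :: p) = w x y + walk_w w y p.
Proof. by rewrite /walk_w /= big_cons. Qed.

Lemma walk_w_cat x p1 p2 :
  walk_w w x (p1 ++ p2) = walk_w w x p1 + walk_w w (last x p1) p2.
Proof.
elim: p1 x => [|y p1 IH] x /=; first by rewrite /walk_w big_nil add0r.
by rewrite !walk_w_cons IH addrA.
Qed.

Lemma walk_w_pv x p :
  walk_w w x p = \sum_(0 <= j < size p) w (pv x p j) (pv x p j.+1).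
Proof.
elim: p x => [|y p IH] x; first by rewrite /walk_w big_nil big_geq.
rewrite walk_w_cons IH big_nat_recl //; congr (_ + _).
apply: eq_big_nat => j /andP[_ lt_jp].
by rewrite /pv /= !(set_nth_default y x) //= ltnW.
Qed.

Lemma pv_last x p : pv x p (size p) = last x p.
Proof. by rewrite /pv -[size p]/((size (x :: p)).-1) nth_last. Qed.

Lemma dist_le_walk F x y p :
  p \in walks F x y -> (dist w F x y <= (walk_w w x p)%:E)%E.
Proof. by rewrite in_setE => walk_p; apply: ereal_inf_lbound; exists p. Qed.

Lemma dist_self_le0 F x : (dist w F x x <= 0%:E)%E.
Proof.
by have := @dist_le_walk F x x [::]; rewrite /walk_w big_nil; apply; rewrite in_setE.
Qed.

Lemma dist_le_edge F x y : (x, y) \in F -> (dist w F x y <= (w x y)%:E)%E.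
Proof.
move=> xy_F; have := @dist_le_walk F x y [:: y].
rewrite walk_w_cons /walk_w big_nil addr0; apply.
by rewrite in_setE; split => //=; rewrite andbT.
Qed.

Lemma dist_le_add F x y z r1 r2 :
  (dist w F x y <= r1%:E)%E -> (dist w F y z <= r2%:E)%E ->
  (dist w F x z <= (r1 + r2)%:E)%E.
Proof.
move=> le_xy le_yz; apply/lee_addgt0Pr => e e_gt0.
have e2_gt0 : 0 < e / 2 by rewrite divr_gt0.
have /ereal_inf_lt [_ [p1 [path_p1 last_p1] <-] lt_p1] :
    (dist w F x y < (r1 + e / 2)%:E)%E.
  by apply: le_lt_trans le_xy _; rewrite lte_fin ltrDl.
have /ereal_inf_lt [_ [p2 walk_p2 <-] lt_p2] :
    (dist w F y z < (r2 + e / 2)%:E)%E.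
  by apply: le_lt_trans le_yz _; rewrite lte_fin ltrDl.
apply: le_trans (dist_le_walk (p := p1 ++ p2) _) _.
  case: walk_p2 => path_p2 last_p2.
  by rewrite in_setE; split; rewrite ?cat_path ?last_cat last_p1 ?path_p1.
rewrite lee_fin walk_w_cat last_p1 [X in _ <= _ + X]splitr addrACA.
by rewrite !lte_fin in lt_p1 lt_p2; exact/ltW/ltrD.
Qed.

Lemma dist_le_sum_nat F (f : nat -> V) a b : (a <= b)%N ->
  (forall j, (a <= j < b)%N -> (f j, f j.+1) \in F) ->
  (dist w F (f a) (f b) <= (\sum_(a <= j < b) w (f j) (f j.+1))%:E)%E.
Proof.
elim: b => [|b IH]; first by rewrite leqn0 => /eqP-> _; rewrite big_geq ?dist_self_le0.
rewrite leq_eqVlt ltnS => /orP[/eqP<- _|le_ab edges]; first by rewrite big_geq ?dist_self_le0.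
rewrite big_nat_recr //=; apply: dist_le_add.
  by apply: IH => // j /andP[le_aj lt_jb]; apply: edges; rewrite le_aj ltnW.
by apply: dist_le_edge; apply: edges; rewrite le_ab /=.
Qed.

Lemma dist_le_chain F (f : nat -> V) (c : R) i I : path ltn i I ->
  (forall a b, (a, b) \in segs (i :: I) -> (i <= a)%N -> (a < b <= last i I)%N ->
     (dist w F (f a) (f b) <= (c * \sum_(a <= j < b) w (f j) (f j.+1))%:E)%E) ->
  (dist w F (f i) (f (last i I)) <=
     (c * \sum_(i <= j < last i I) w (f j) (f j.+1))%:E)%E.
Proof.
elim: I i => [|j I IH] i /=; first by rewrite big_geq // mulr0 dist_self_le0.
move=> /andP[lt_ij path_jI] seg_le.
have le_j_last := path_ltn_le_last path_jI.
rewrite (big_cat_nat (ltnW lt_ij) le_j_last) /= mulrDr.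
apply: dist_le_add; first by apply: seg_le; rewrite ?mem_head ?lt_ij.
apply: IH => // a b ab_seg le_ja; apply: seg_le; last exact: leq_trans (ltnW lt_ij) le_ja.
by rewrite /segs /= in_cons ab_seg orbT.
Qed.

End Walks.

Section Completion.
Variables (R : realType) (V : finType) (E : {set V * V}) (w : V -> V -> R).
Hypothesis w_pos : forall u v, (u, v) \in E -> 0 < w u v.
Variables (alpha beta : R).
Hypotheses (halpha : 1 <= alpha) (hbeta : 0 <= beta).

Lemma Wmax_ge0 : 0 <= Wmax w E.
Proof. by rewrite /Wmax; elim/big_rec: _ => // e r _ r_ge0; rewrite le_max r_ge0 orbT. Qed.

Lemma dist_le_segmentation (H : {set V * V}) x p I :
  path (fun u v => (u, v) \in E) x p ->
  is_segmentation w E H alpha x p I -> Ealpha w H alpha x p I \subset H ->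
  (dist w H x (last x p) <= (alpha * walk_w w x p)%:E)%E.
Proof.
move=> path_p; case: I => [|i I] [//= _ /= -> last_I sorted_I seg_le] Ealpha_H.
have edge j : (j < size p)%N -> (pv x p j, pv x p j.+1) \in E.
  by move=> lt_jp; move/(pathP x): path_p; apply.
rewrite walk_w_pv -pv_last -last_I.
apply: (dist_le_chain (f := pv x p) sorted_I) => a b ab_seg _ /andP[lt_ab].
rewrite last_I => le_bp.
have [long|short] := ltnP 1 (b - a).
  apply: le_trans (seg_le _ ab_seg long) _.
  rewrite EFinM lee_wpmul2l ?lee_fin ?(le_trans ler01 halpha) //=.
  by apply: dist_le_sum_nat (ltnW lt_ab) _ => j /andP[_ lt_jb]; apply: edge; lia.
have b_eq : b = a.+1 by lia.
subst b.
rewrite big_nat1 leNgt; apply/negP => far.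
have edge_H : (pv x p a, pv x p a.+1) \in H.
  apply: (fintype.subsetP Ealpha_H); rewrite inE; apply/hasP; exists (a, a.+1) => //=.
  by rewrite !eqxx far.
have w_ge0 : 0 <= w (pv x p a) (pv x p a.+1) by apply/ltW/w_pos/edge; lia.
have := lt_le_trans far (dist_le_edge w edge_H).
by rewrite lte_fin ltNge ler_peMl.
Qed.

Lemma completion_step_proper (H H' : {set V * V}) :
  completion_step w E alpha beta H H' -> H \proper H'.
Proof.
move=> [x [y [p [I [far [walk_p shortest] [seg _] ->]]]]].
apply: properUl; apply/negP => Ealpha_H.
move: walk_p; rewrite in_setE => -[path_p last_p].
have := dist_le_segmentation path_p seg Ealpha_H.
rewrite last_p => /(lt_le_trans far).
by rewrite -shortest -EFinM -EFinD lte_fin ltNge lerDl (mulr_ge0 hbeta Wmax_ge0).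
Qed.

Lemma completion_acc (H : {set V * V}) :
  Acc (fun H' H => completion_step w E alpha beta H H') H.
Proof.
have [n] := ubnP #|~: H|; elim: n H => [|n IH] H lt_Hn; first by rewrite ltn0 in lt_Hn.
constructor => H' /completion_step_proper lt_HH'.
have lt_card : (#|~: H'| < #|~: H|)%N by rewrite proper_card // properC.
by apply: IH; apply: leq_trans lt_card _; rewrite -ltnS.
Qed.

End Completion.

Theorem corollary3p2 (R : realType) (V : finType) (E : {set V * V})
    (w : V -> V -> R)
    (E_irr : forall u, (u, u) \notin E)
    (E_sym : forall u v, (u, v) \in E -> (v, u) \in E)
    (w_sym : forall u v, w u v = w v u)
    (w_pos : forall u v, (u, v) \in E -> 0 < w u v)
    (E_short : forall u v, (u, v) \in E -> dist w E u v = (w u v)%:E)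
    (alpha beta : R) (halpha : 1 <= alpha) (hbeta : 0 <= beta)
    (H0 : {set V * V}) (H0_sub : H0 \subset E)
    (H0_sym : forall u v, (u, v) \in H0 -> (v, u) \in H0) :
  Acc (fun H' H => completion_step w E alpha beta H H') H0.
Proof. exact: (completion_acc w_pos halpha hbeta H0). Qed.
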